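(* Let $\mathbb{E}$ be a finitely complete category, $\Sigma$ a fibrational class of split epimorphisms in $\mathbb{E}$, and suppose $\mathbb{E}$ is a $\Sigma$-Mal'tsev category. Then every $\Sigma$-relation $S$ on an object $X$ is transitive, and every symmetric $\Sigma$-relation on $X$ is an equivalence relation.
   Context: A split epimorphism is a pair $(f,s)$ with $f\colon X\to Y$, $s\colon Y\to X$, $fs=1_Y$ (the splitting is part of the data). A class $\Sigma$ of split epimorphisms is fibrational if it contains every split epimorphism $(f,s)$ with $f$ an isomorphism and is stable under pullback: if $(f,s)\colon X\rightleftarrows Y$ is in $\Sigma$ and $g\colon Y'\to Y$ is any morphism, the pulled-back split epimorphism $(f',s')\colon Y'\times_Y X\rightleftarrows Y'$, $s'=(1_{Y'},sg)$, is in $\Sigma$. A pair of morphisms with common codomain $Z$ is jointly extremally epic if it does not factor jointly through any monomorphism into $Z$ which is not an isomorphism. $\mathbb{E}$ is a $\Sigma$-Mal'tsev category if for every split epimorphism $(f,s)\colon X\rightleftarrows Y$ in $\Sigma$ and every split epimorphism $(g,t)$ with $g\colon Y'\to Y$, $gt=1_Y$, letting $X'=Y'\times_Y X$ be the pullback of $f$ along $g$, $s'=(1_{Y'},sg)\colon Y'\to X'$ and $\bar t=(tf,1_X)\colon X\to X'$, the pair $(s',\bar t)$ is jointly extremally epic. A $\Sigma$-relation on $X$ is a reflexive relation $(d_0,d_1)\colon S\rightarrowtail X\times X$ with reflexivity map $s_0\colon X\to S$ such that the split epimorphism $(d_0,s_0)$ belongs to $\Sigma$. *)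

Set Implicit Arguments.
Unset Strict Implicit.

(** Categories (hom-types with Leibniz equality). [comp g f] is g ∘ f. *)
Record Category := {
  Ob :> Type;
  Hom : Ob -> Ob -> Type;
  idm : forall X, Hom X X;
  comp : forall X Y Z, Hom Y Z -> Hom X Y -> Hom X Z;
  comp_assoc : forall X Y Z W (h : Hom Z W) (g : Hom Y Z) (f : Hom X Y),
      comp h (comp g f) = comp (comp h g) f;
  comp_id_l : forall X Y (f : Hom X Y), comp (idm Y) f = f;
  comp_id_r : forall X Y (f : Hom X Y), comp f (idm X) = f
}.

Arguments Hom {c} _ _.
Arguments idm {c} _.
Arguments comp {c X Y Z} _ _.

Section Notions.
Variable C : Category.

Definition is_mono {Z M : C} (m : Hom M Z) : Prop :=
  forall A (a b : Hom A M), comp m a = comp m b -> a = b.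

Definition is_iso {X Y : C} (f : Hom X Y) : Prop :=
  exists g : Hom Y X, comp g f = idm X /\ comp f g = idm Y.

Definition jointly_extremally_epic {A B Z : C} (f1 : Hom A Z) (f2 : Hom B Z)
  : Prop :=
  forall M (m : Hom M Z) (g1 : Hom A M) (g2 : Hom B M),
    is_mono m -> comp m g1 = f1 -> comp m g2 = f2 -> is_iso m.

Definition is_terminal (T : C) : Prop :=
  forall X : C, exists! t : Hom X T, True.

Definition is_pullback {A B Z P : C} (f : Hom A Z) (g : Hom B Z)
  (p1 : Hom P A) (p2 : Hom P B) : Prop :=
  comp f p1 = comp g p2 /\
  forall Q (q1 : Hom Q A) (q2 : Hom Q B), comp f q1 = comp g q2 ->
    exists! u : Hom Q P, comp p1 u = q1 /\ comp p2 u = q2.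

End Notions.

Arguments is_mono {C Z M} _.
Arguments is_iso {C X Y} _.
Arguments jointly_extremally_epic {C A B Z} _ _.
Arguments is_terminal {C} _.
Arguments is_pullback {C A B Z P} _ _ _ _.

Record FinLim (C : Category) := {
  term : C;
  term_arrow : forall X : C, Hom X term;
  term_unique : forall (X : C) (t : Hom X term), t = term_arrow X;
  pb : forall A B Z : C, Hom A Z -> Hom B Z -> C;
  pb_p1 : forall A B Z (f : Hom A Z) (g : Hom B Z), Hom (pb f g) A;
  pb_p2 : forall A B Z (f : Hom A Z) (g : Hom B Z), Hom (pb f g) B;
  pb_is_pullback : forall A B Z (f : Hom A Z) (g : Hom B Z),
      is_pullback f g (pb_p1 f g) (pb_p2 f g)
}.

Arguments term {C} _.
Arguments term_arrow {C} _ _.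
Arguments pb {C} _ {A B Z} _ _.
Arguments pb_p1 {C} _ {A B Z} _ _.
Arguments pb_p2 {C} _ {A B Z} _ _.

Section WithLimits.
Variable C : Category.
Variable L : FinLim C.

Definition SplitEpiClass := forall X Y : C, Hom X Y -> Hom Y X -> Prop.

Definition is_split_epi_class (Sigma : SplitEpiClass) : Prop :=
  forall X Y (f : Hom X Y) (s : Hom Y X), Sigma X Y f s -> comp f s = idm Y.

(** Fibrational class: contains every split epi (f,s) with f iso, and is
    stable under (chosen) pullback: pulling (f,s) back along g : Y' -> Y
    gives (f', s') : Y' ×_Y X ⇄ Y' with f' the first projection and
    s' = (1_{Y'}, s g). *)
Definition fibrational (Sigma : SplitEpiClass) : Prop :=
  is_split_epi_class Sigma /\
  (forall X Y (f : Hom X Y) (s : Hom Y X),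
      comp f s = idm Y -> is_iso f -> Sigma X Y f s) /\
  (forall X Y (f : Hom X Y) (s : Hom Y X), Sigma X Y f s ->
    forall Y' (g : Hom Y' Y) (s' : Hom Y' (pb L g f)),
      comp (pb_p1 L g f) s' = idm Y' ->
      comp (pb_p2 L g f) s' = comp s g ->
      Sigma (pb L g f) Y' (pb_p1 L g f) s').

Definition Sigma_Maltsev (Sigma : SplitEpiClass) : Prop :=
  forall X Y (f : Hom X Y) (s : Hom Y X), Sigma X Y f s ->
  forall Y' (g : Hom Y' Y) (t : Hom Y Y'), comp g t = idm Y ->
  forall (s' : Hom Y' (pb L g f)) (tbar : Hom X (pb L g f)),
    comp (pb_p1 L g f) s' = idm Y' ->
    comp (pb_p2 L g f) s' = comp s g ->
    comp (pb_p1 L g f) tbar = comp t f ->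
    comp (pb_p2 L g f) tbar = idm X ->
    jointly_extremally_epic s' tbar.

Definition prodXX (X : C) : C := pb L (term_arrow L X) (term_arrow L X).
Definition pr1 (X : C) : Hom (prodXX X) X := pb_p1 L (term_arrow L X) (term_arrow L X).
Definition pr2 (X : C) : Hom (prodXX X) X := pb_p2 L (term_arrow L X) (term_arrow L X).

Definition is_relation (X S : C) (d0 d1 : Hom S X) : Prop :=
  exists u : Hom S (prodXX X),
    comp (pr1 X) u = d0 /\ comp (pr2 X) u = d1 /\ is_mono u.

Definition is_reflexivity_map (X S : C) (d0 d1 : Hom S X) (s0 : Hom X S) : Prop :=
  comp d0 s0 = idm X /\ comp d1 s0 = idm X.

Definition Sigma_relation (Sigma : SplitEpiClass) (X S : C) (d0 d1 : Hom S X)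
  (s0 : Hom X S) : Prop :=
  is_relation d0 d1 /\ is_reflexivity_map d0 d1 s0 /\ Sigma S X d0 s0.

Definition rel_reflexive (X S : C) (d0 d1 : Hom S X) : Prop :=
  exists s0 : Hom X S, is_reflexivity_map d0 d1 s0.

Definition rel_symmetric (X S : C) (d0 d1 : Hom S X) : Prop :=
  exists sigma : Hom S S, comp d0 sigma = d1 /\ comp d1 sigma = d0.

Definition rel_transitive (X S : C) (d0 d1 : Hom S X) : Prop :=
  exists tau : Hom (pb L d1 d0) S,
    comp d0 tau = comp d0 (pb_p1 L d1 d0) /\
    comp d1 tau = comp d1 (pb_p2 L d1 d0).

Definition rel_equivalence (X S : C) (d0 d1 : Hom S X) : Prop :=
  rel_reflexive d0 d1 /\ rel_symmetric d0 d1 /\ rel_transitive d0 d1.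
End WithLimits.

Arguments fibrational {C} L Sigma.
Arguments Sigma_Maltsev {C} L Sigma.
Arguments Sigma_relation {C} L Sigma {X S} d0 d1 s0.
Arguments rel_symmetric {C X S} d0 d1.
Arguments rel_transitive {C} L {X S} d0 d1.
Arguments rel_equivalence {C} L {X S} d0 d1.

Set Implicit Arguments.
Unset Strict Implicit.

(* For a Σ-relation S on X, the Mal'tsev condition applied to (d0, s0) pulled
   back along d1 (split by s0) says that the two inclusions S ⇉ S ×_X S,
   x ↦ (x, s0 d1 x) and x ↦ (s0 d0 x, x), are jointly extremally epic.
   Both land in the subobject of composable pairs (x, y) with (d0 x, d1 y) ∈ S,
   which is the pullback of the mono S ↣ X × X; hence that subobject is
   everything, and this is transitivity. *)

Section Pullbacks.
Variable C : Category.

Lemma pullback_ext (A B Z P : C) (f : Hom A Z) (g : Hom B Z)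
  (p1 : Hom P A) (p2 : Hom P B) : is_pullback f g p1 p2 ->
  forall Q (a b : Hom Q P), comp p1 a = comp p1 b -> comp p2 a = comp p2 b -> a = b.
Proof.
  intros [Hc Hu] Q a b E1 E2.
  destruct (Hu Q (comp p1 a) (comp p2 a)) as [x [_ Hx]].
  { rewrite !comp_assoc, Hc; reflexivity. }
  rewrite <- (Hx a), (Hx b); auto.
Qed.

Lemma pullback_mono (A B Z P : C) (f : Hom A Z) (g : Hom B Z)
  (p1 : Hom P A) (p2 : Hom P B) : is_pullback f g p1 p2 -> is_mono f -> is_mono p2.
Proof.
  intros HP Hf Q a b E.
  apply (pullback_ext HP); auto.
  destruct HP as [Hc _].
  apply Hf. rewrite !comp_assoc, Hc, <- !comp_assoc, E; reflexivity.
Qed.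

End Pullbacks.

Section FiniteLimits.
Variable C : Category.
Variable L : FinLim C.

Lemma prodXX_pair (X Q : C) (a b : Hom Q X) :
  exists p : Hom Q (prodXX L X), comp (pr1 L X) p = a /\ comp (pr2 L X) p = b.
Proof.
  destruct (pb_is_pullback L (term_arrow L X) (term_arrow L X)) as [_ Hu].
  destruct (Hu Q a b) as [p [Hp _]].
  { rewrite (term_unique (comp (term_arrow L X) a)),
      (term_unique (comp (term_arrow L X) b)); reflexivity. }
  exists p; exact Hp.
Qed.

Lemma prodXX_ext (X Q : C) (a b : Hom Q (prodXX L X)) :
  comp (pr1 L X) a = comp (pr1 L X) b -> comp (pr2 L X) a = comp (pr2 L X) b -> a = b.
Proof. apply (pullback_ext (pb_is_pullback L (term_arrow L X) (term_arrow L X))). Qed.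

(* The pullback of m along h is a mono through which e1 and e2 factor. *)
Lemma jointly_extremally_epic_factor (A B Z W M : C)
  (e1 : Hom A Z) (e2 : Hom B Z) (m : Hom M W) (h : Hom Z W)
  (k1 : Hom A M) (k2 : Hom B M) :
  jointly_extremally_epic e1 e2 -> is_mono m ->
  comp m k1 = comp h e1 -> comp m k2 = comp h e2 ->
  exists k : Hom Z M, comp m k = h.
Proof.
  intros Hepi Hm E1 E2.
  pose proof (pb_is_pullback L m h) as HP.
  destruct (proj2 HP A k1 e1 E1) as [g1 [[_ Hg1] _]].
  destruct (proj2 HP B k2 e2 E2) as [g2 [[_ Hg2] _]].
  destruct (Hepi _ _ g1 g2 (pullback_mono HP Hm) Hg1 Hg2) as [i [_ Hi]].
  exists (comp (pb_p1 L m h) i).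
  rewrite comp_assoc, (proj1 HP), <- comp_assoc, Hi; apply comp_id_r.
Qed.

Lemma relation_factor_jointly_extremally_epic (X S Q A B : C) (d0 d1 : Hom S X)
  (a b : Hom Q X) (e1 : Hom A Q) (e2 : Hom B Q) (k1 : Hom A S) (k2 : Hom B S) :
  is_relation L d0 d1 -> jointly_extremally_epic e1 e2 ->
  comp d0 k1 = comp a e1 -> comp d1 k1 = comp b e1 ->
  comp d0 k2 = comp a e2 -> comp d1 k2 = comp b e2 ->
  exists k : Hom Q S, comp d0 k = a /\ comp d1 k = b.
Proof.
  intros [u [Hu0 [Hu1 Hum]]] Hepi E10 E11 E20 E21.
  destruct (prodXX_pair a b) as [h [Ha Hb]].
  assert (Hfactor : forall T (e : Hom T Q) (k : Hom T S),
             comp d0 k = comp a e -> comp d1 k = comp b e -> comp u k = comp h e).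
  { intros T e k Ek0 Ek1; apply prodXX_ext.
    - rewrite !comp_assoc, Hu0, Ha; exact Ek0.
    - rewrite !comp_assoc, Hu1, Hb; exact Ek1. }
  destruct (jointly_extremally_epic_factor Hepi Hum (Hfactor _ _ _ E10 E11)
              (Hfactor _ _ _ E20 E21)) as [k Hk].
  exists k; split.
  - rewrite <- Hu0, <- comp_assoc, Hk; exact Ha.
  - rewrite <- Hu1, <- comp_assoc, Hk; exact Hb.
Qed.

Lemma Sigma_relation_transitive (Sigma : SplitEpiClass C) (X S : C)
  (d0 d1 : Hom S X) (s0 : Hom X S) :
  Sigma_Maltsev L Sigma -> Sigma_relation L Sigma d0 d1 s0 -> rel_transitive L d0 d1.
Proof.
  intros HM [Hrel [[Hs0 Hs1] HS]].
  destruct (pb_is_pullback L d1 d0) as [_ Hu].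
  destruct (Hu S (idm S) (comp s0 d1)) as [s' [[Hs'1 Hs'2] _]].
  { rewrite comp_id_r, comp_assoc, Hs0, comp_id_l; reflexivity. }
  destruct (Hu S (comp s0 d0) (idm S)) as [tb [[Htb1 Htb2] _]].
  { rewrite comp_id_r, comp_assoc, Hs1, comp_id_l; reflexivity. }
  pose proof (HM S X d0 s0 HS S d1 s0 Hs1 s' tb Hs'1 Hs'2 Htb1 Htb2) as Hepi.
  apply (relation_factor_jointly_extremally_epic (k1 := idm S) (k2 := idm S) Hrel Hepi).
  - rewrite <- comp_assoc, Hs'1, !comp_id_r; reflexivity.
  - rewrite <- comp_assoc, Hs'2, comp_assoc, Hs1, comp_id_l, comp_id_r; reflexivity.
  - rewrite <- comp_assoc, Htb1, comp_assoc, Hs0, comp_id_l, comp_id_r; reflexivity.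
  - rewrite <- comp_assoc, Htb2, !comp_id_r; reflexivity.
Qed.

End FiniteLimits.

Theorem proposition2p2 (C : Category) (L : FinLim C) (Sigma : SplitEpiClass C) :
  fibrational L Sigma -> Sigma_Maltsev L Sigma ->
  forall (X S : C) (d0 d1 : Hom S X) (s0 : Hom X S),
    Sigma_relation L Sigma d0 d1 s0 ->
    rel_transitive L d0 d1 /\
    (rel_symmetric d0 d1 -> rel_equivalence L d0 d1).
Proof.
  intros _ HM X S d0 d1 s0 HSrel.
  pose proof (Sigma_relation_transitive HM HSrel) as Htrans.
  split; [exact Htrans |].
  intros Hsym; split; [| split; assumption].
  exists s0; exact (proj1 (proj2 HSrel)).
Qed.
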